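(* Let $n,k$ be positive integers (with $k$ allowed to depend on $n$) and let $p\in[0,1]$. If $\mathbf{G}\sim\mathcal{G}(n,p,k)$, then asymptotically almost surely $\mathbf{G}$ is $s$-almost-complete for $$s=\max\bigl(2\sqrt{n}(1-p),\;9e^2\log(kn)\bigr).$$
   Context: A graph $G$ ''over $k$ blocks of size $n$'' has vertex set $V_1\sqcup\dots\sqcup V_k$ with $|V_i|=n$ for every $i$, where $n$ is a power of $2$ with $\log n$ even. Every vertex of a block $V_i$ is identified with a string in $\{0,1\}^{\log n}$, which is written as a pair $(x,y)\in\Sigma\times\Sigma$ with $\Sigma=\{0,1\}^{(\log n)/2}$ ($x$ the first half of the bits, $y$ the second half). $\mathcal{G}(n,p,k)$ is the distribution obtained by sampling a graph on the $kn$ vertices $V_1\sqcup\dots\sqcup V_k$ in which each pair of vertices lying in different blocks is an edge independently with probability $p$, and pairs inside a block are never edges (equivalently, an Erdős–Rényi graph $\mathcal{G}(nk,p)$ intersected with the complete $k$-partite graph with parts $V_1,\dots,V_k$). Given $s>0$, $G$ is $s$-almost-complete if for every $i\neq j\in[k]$ and every $x_i,y_i,x_j\in\Sigma$ there are at most $s$ values $y_j\in\Sigma$ such that the vertex $(x_i,y_i)$ of $V_i$ and the vertex $(x_j,y_j)$ of $V_j$ are not adjacent. ''Asymptotically almost surely'' means with probability $1-o(1)$ as $n\to\infty$. *)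

From HB Require Import structures.
From mathcomp Require Import all_boot all_order all_algebra.
From mathcomp Require Import all_classical all_reals all_analysis.
Set Implicit Arguments. Unset Strict Implicit. Unset Printing Implicit Defensive.
Import Order.TTheory GRing.Theory Num.Theory.
Local Open Scope ring_scope.

(* We index by m with n = 4^m = 2^(2m), so log2 n = 2m is even and
   Sigma = {0,1}^m is identified with 'I_(2^m). *)
Definition Sigma (m : nat) := 'I_(2 ^ m).
Definition vert (k m : nat) := ('I_k * (Sigma m * Sigma m))%type.

Definition blocksize (m : nat) : nat := (4 ^ m)%N.

(* Each unordered pair of vertices in different blocks is represented exactly
   once, as the ordered pair (u, v) with block(u) < block(v). *)
Definition cross_pairs (k m : nat) : {set vert k m * vert k m} :=
  [set uv | (val uv.1.1 < val uv.2.1)%N].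

(* A graph over k blocks of size n is a set E of cross pairs (its edges). *)
Definition adj (k m : nat) (E : {set vert k m * vert k m}) (u v : vert k m)
  : bool := ((u, v) \in E) || ((v, u) \in E).

Definition almost_complete (R : numDomainType) (k m : nat)
  (E : {set vert k m * vert k m}) (s : R) : bool :=
  [forall i : 'I_k, forall j : 'I_k, (i != j) ==>
    [forall xi : Sigma m, forall yi : Sigma m, forall xj : Sigma m,
      (#|[set yj : Sigma m | ~~ adj E (i, (xi, yi)) (j, (xj, yj))]|%:R <= s)]].

(* Probability, under G(n,p,k) with n = 4^m, that a graph satisfies A:
   each cross pair is an edge independently with probability p. *)
Definition Gnpk_prob (R : numDomainType) (k m : nat) (p : R)
  (A : pred {set vert k m * vert k m}) : R :=
  \sum_(E : {set vert k m * vert k m} | (E \subset cross_pairs k m) && A E)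
     p ^+ #|E| * (1 - p) ^+ (#|cross_pairs k m| - #|E|).

Definition log2 (R : realType) (x : R) : R := ln x / ln 2.

Definition s_bound (R : realType) (k m : nat) (p : R) : R :=
  Num.max (2 * Num.sqrt ((blocksize m)%:R) * (1 - p))
          (9 * expR 1 ^+ 2 * log2 ((k * blocksize m)%N%:R)).

(* For a vertex (xi, yi) of V_i and a row xj of V_j, the number X of yj such that
   (xj, yj) is not adjacent to (xi, yi) counts the non-edges among sqrt n = 2^m
   independent pairs, each missing with probability 1 - p.  Markov's inequality for
   expR (X / 3) gives P(X > s) <= expR (- s / 12) once s >= 2 sqrt n (1 - p), and
   s >= 36 ln (kn) makes this at most (kn)^-3.  A union bound over the k^2 n^(3/2)
   choices of (i, j, xi, yi, xj) leaves a failure probability at most n^(-1/2). *)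

From HB Require Import structures.
From mathcomp Require Import all_boot all_order all_algebra.
From mathcomp Require Import all_classical all_reals all_analysis.
From mathcomp Require Import lra ring.
Import Order.TTheory GRing.Theory Num.Theory numFieldNormedType.Exports.
Local Open Scope ring_scope.

Section RandomSubset.
Local Set Implicit Arguments.
Local Unset Strict Implicit.
Variables (R : numDomainType) (T : finType) (C : {set T}) (p : R).

Definition bernoulli_weight (E : {set T}) : R :=
  \prod_c if c \in E then (if c \in C then p else 0)
          else (if c \in C then 1 - p else 1).

Definition bernoulli_prob (A : pred {set T}) : R := \sum_(E | A E) bernoulli_weight E.

Lemma bernoulli_weightE (E : {set T}) : E \subset C ->
  bernoulli_weight E = p ^+ #|E| * (1 - p) ^+ (#|C| - #|E|).
Proof.
move=> EC; rewrite /bernoulli_weight (bigID (mem E)) /=.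
rewrite (eq_bigr (fun _ => p)); last by move=> c cE; rewrite cE (fintype.subsetP EC).
rewrite prodr_const; congr (_ * _).
rewrite (bigID (mem C)) /= [X in _ * X]big1 ?mulr1; last first.
  by move=> c /andP[/negbTE-> /negbTE->].
rewrite (eq_bigr (fun _ => 1 - p)); last by move=> c /andP[/negbTE-> ->].
rewrite prodr_const; congr (_ ^+ _).
rewrite -[in RHS](finset.setIidPr EC) -cardsD.
by apply: eq_card => c; rewrite finset.in_setD unfold_in.
Qed.

Lemma bernoulli_weight_out (E : {set T}) : ~~ (E \subset C) -> bernoulli_weight E = 0.
Proof.
by case/subsetPn => c cE cC; rewrite /bernoulli_weight (bigD1 c) //= cE (negbTE cC) mul0r.
Qed.

Lemma bernoulli_probE (A : pred {set T}) : bernoulli_prob A =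
  \sum_(E : {set T} | (E \subset C) && A E) p ^+ #|E| * (1 - p) ^+ (#|C| - #|E|).
Proof.
rewrite /bernoulli_prob (bigID (fun E : {set T} => E \subset C)) /=.
rewrite [X in _ + X]big1 ?addr0 => [|E /andP[_ /bernoulli_weight_out] //].
apply: eq_big => [E|E /andP[_ /bernoulli_weightE //]]; exact: andbC.
Qed.

Lemma bernoulli_expect_pow (S : {set T}) (a : R) : S \subset C ->
  \sum_E bernoulli_weight E * a ^+ #|S :\: E| = (p + (1 - p) * a) ^+ #|S|.
Proof.
move=> SC.
pose F c := if c \in C then p else 0.
pose G c := (if c \in C then 1 - p else 1) * (if c \in S then a else 1).
transitivity (\sum_(E : {set T}) \prod_c (if c \in E then F c else G c)).
  apply: eq_bigr => E _; rewrite -prodr_const big_mkcond -big_split /=.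
  apply: eq_bigr => c _; rewrite /F /G finset.in_setD.
  by case: (c \in E); case: (c \in S); rewrite /= ?mulr1.
rewrite -bigA_distr -prodr_const [RHS]big_mkcond /=; apply: eq_bigr => c _.
rewrite /F /G; case cS: (c \in S); first by rewrite (fintype.subsetP SC).
by case: (c \in C); rewrite ?mulr1 ?add0r // addrC subrK.
Qed.

Lemma bernoulli_prob_predT : bernoulli_prob predT = 1.
Proof.
have := @bernoulli_expect_pow finset.set0 1 (finset.sub0set C).
rewrite cards0 expr0 /bernoulli_prob => <-.
by apply: eq_bigr => E _; rewrite expr1n mulr1.
Qed.

Lemma bernoulli_probC (A : pred {set T}) :
  bernoulli_prob (predC A) = 1 - bernoulli_prob A.
Proof.
by rewrite -bernoulli_prob_predT /bernoulli_prob (bigID A predT) /= addrC addrK.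
Qed.

Hypothesis p01 : 0 <= p <= 1.

Lemma bernoulli_weight_ge0 (E : {set T}) : 0 <= bernoulli_weight E.
Proof.
case/andP: p01 => p0 p1; apply: prodr_ge0 => c _.
by case: (c \in E); case: (c \in C); rewrite ?subr_ge0.
Qed.

Lemma bernoulli_prob_le (A B : pred {set T}) :
  {subset A <= B} -> bernoulli_prob A <= bernoulli_prob B.
Proof.
move=> AB; rewrite /bernoulli_prob [leRHS](bigID A) /= -[leLHS]addr0 lerD //.
  by rewrite (eq_bigl A) // => E; rewrite andb_idl // => /AB.
by apply: sumr_ge0 => E _; exact: bernoulli_weight_ge0.
Qed.

Lemma bernoulli_prob_union_bound (I : finType) (A : pred {set T}) (B : I -> pred {set T}) :
  (forall E, A E -> exists e, B e E) ->
  bernoulli_prob A <= \sum_e bernoulli_prob (B e).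
Proof.
move=> AB; rewrite /bernoulli_prob [leRHS](exchange_big_dep predT) //= big_mkcond /=.
apply: ler_sum => E _; case: ifP => [/AB [e Be]|_].
  rewrite (bigD1 e) //= lerDl.
all: by apply: sumr_ge0 => *; exact: bernoulli_weight_ge0.
Qed.

End RandomSubset.

Lemma expR_inv3_le (R : realType) : expR (3^-1) <= 3 / 2 :> R.
Proof.
have := expR_ge1Dx (- 3^-1 : R); rewrite expRN.
set a := expR 3^-1 => h.
have a0 : 0 < a := expR_gt0 _.
have aVa : a * a^-1 = 1 by rewrite mulfV ?gt_eqF.
have h3 : (3 : R) * 3^-1 = 1 by rewrite mulfV.
nra.
Qed.

Section Chernoff.
Local Set Implicit Arguments.
Local Unset Strict Implicit.
Variables (R : realType) (T : finType) (C : {set T}) (p : R).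
Hypothesis p01 : 0 <= p <= 1.

Lemma bernoulli_missing_tail (S : {set T}) (s : R) : S \subset C ->
  2 * #|S|%:R * (1 - p) <= s ->
  bernoulli_prob C p [pred E | s < #|S :\: E|%:R] <= expR (- (s / 12)).
Proof.
move=> SC hs; have [p0 p1] := andP p01.
set a := expR (3^-1 : R).
have a_ge1 : 1 <= a by rewrite /a -expR0 ler_expR invr_ge0.
have es_gt0 : 0 < expR (s / 3) := expR_gt0 _.
have markov E : (s < #|S :\: E|%:R) -> expR (s / 3) <= a ^+ #|S :\: E|.
  by move=> /ltW hX; rewrite /a -expRM_natl ler_expR ler_wpM2r ?invr_ge0.
apply: (@le_trans _ _ (\sum_E bernoulli_weight C p E * (a ^+ #|S :\: E| / expR (s / 3)))).
  rewrite /bernoulli_prob [leRHS](bigID [pred E | s < #|S :\: E|%:R]) /= -[leLHS]addr0.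
  apply: lerD.
    apply: ler_sum => E /markov hX.
    by rewrite -[leLHS]mulr1 ler_wpM2l ?bernoulli_weight_ge0 // ler_pdivlMr // mul1r.
  apply: sumr_ge0 => E _; apply: mulr_ge0; first exact: bernoulli_weight_ge0.
  by rewrite divr_ge0 ?exprn_ge0 ?expR_ge0.
under eq_bigr do rewrite mulrA.
rewrite -mulr_suml bernoulli_expect_pow // ler_pdivrMr // -expRD.
have -> : p + (1 - p) * a = 1 + (1 - p) * (a - 1) by ring.
apply: (@le_trans _ _ (expR ((1 - p) * (a - 1)) ^+ #|S|)).
  apply: lerXn2r; rewrite ?nnegrE ?expR_ge0 ?expR_ge1Dx //.
  by rewrite addr_ge0 // mulr_ge0 // subr_ge0.
rewrite -expRM_natl ler_expR.
have a_le : a - 1 <= 2^-1 by have := expR_inv3_le R; rewrite -/a; lra.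
have hN : 0 <= #|S|%:R * (1 - p) :> R by rewrite mulr_ge0 ?subr_ge0.
nra.
Qed.

End Chernoff.

Section CrossStar.
Local Set Implicit Arguments.
Local Unset Strict Implicit.
Variables k m : nat.
Implicit Types (i j : 'I_k) (xi yi xj y : Sigma m) (E : {set vert k m * vert k m}).

Definition cross_edge i j xi yi xj y : vert k m * vert k m :=
  if (i < j)%N then ((i, (xi, yi)), (j, (xj, y))) else ((j, (xj, y)), (i, (xi, yi))).

Definition cross_star i j xi yi xj : {set vert k m * vert k m} :=
  [set cross_edge i j xi yi xj y | y : Sigma m].

Lemma cross_edge_inj i j xi yi xj : injective (cross_edge i j xi yi xj).
Proof. by move=> y1 y2; rewrite /cross_edge; case: ifP => _ []. Qed.

Lemma card_cross_star i j xi yi xj : #|cross_star i j xi yi xj| = (2 ^ m)%N.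
Proof. by rewrite card_imset ?cardsT ?card_ord //; exact: cross_edge_inj. Qed.

Lemma cross_star_sub i j xi yi xj :
  i != j -> cross_star i j xi yi xj \subset cross_pairs k m.
Proof.
move=> ij; apply/fintype.subsetP => _ /imsetP[y _ ->]; rewrite inE /cross_edge.
case: (ltngtP (val i) (val j)) => //= /val_inj eq_ij; by rewrite eq_ij eqxx in ij.
Qed.

Lemma card_nonadj_le E i j xi yi xj :
  (#|[set y | ~~ adj E (i, (xi, yi)) (j, (xj, y))]| <= #|cross_star i j xi yi xj :\: E|)%N.
Proof.
rewrite -(card_imset _ (@cross_edge_inj i j xi yi xj)); apply: subset_leq_card.
apply/fintype.subsetP => _ /imsetP[y + ->]; rewrite inE /adj negb_or => /andP[uv vu].
rewrite finset.in_setD imset_f ?andbT //.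
by rewrite /cross_edge; case: ifP.
Qed.

End CrossStar.

Section DeficientStars.
Local Set Implicit Arguments.
Local Unset Strict Implicit.
Variables (R : realType) (k m : nat).
Implicit Types (p s : R) (E : {set vert k m * vert k m}).

Definition star_index := ('I_k * 'I_k * Sigma m * Sigma m * Sigma m)%type.

Definition deficient_star s (e : star_index) : pred {set vert k m * vert k m} :=
  let: (i, j, xi, yi, xj) := e in
  [pred E | (i != j) && (s < #|cross_star i j xi yi xj :\: E|%:R)].

Lemma Gnpk_probE p (A : pred {set vert k m * vert k m}) :
  Gnpk_prob p A = bernoulli_prob (cross_pairs k m) p A.
Proof. by rewrite bernoulli_probE. Qed.

Lemma not_almost_complete_deficient s E :
  ~~ almost_complete E s -> exists e, deficient_star s e E.
Proof.
case/forallPn => i /forallPn[j]; rewrite negb_imply => /andP[ij].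
case/forallPn => xi /forallPn[yi] /forallPn[xj]; rewrite -ltNge => lt_s.
exists (i, j, xi, yi, xj); rewrite /= ij (lt_le_trans lt_s) // ler_nat.
exact: card_nonadj_le.
Qed.

Lemma bernoulli_prob_deficient_star p s e : 0 <= p <= 1 ->
  2 * (2 ^ m)%:R * (1 - p) <= s ->
  bernoulli_prob (cross_pairs k m) p (deficient_star s e) <= expR (- (s / 12)).
Proof.
move=> p01 hs; case: e => [[[[i j] xi] yi] xj] /=.
have [<-|ij] := eqVneq i j.
  by rewrite /bernoulli_prob big_pred0 ?expR_ge0 // => E; rewrite eqxx.
apply: (le_trans _ (bernoulli_missing_tail p01 (cross_star_sub xi yi xj ij) _)).
  by apply: bernoulli_prob_le => // E; rewrite !inE => /andP[].
by rewrite card_cross_star.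
Qed.

Lemma Gnpk_prob_not_almost_complete p s : 0 <= p <= 1 ->
  2 * (2 ^ m)%:R * (1 - p) <= s ->
  1 - Gnpk_prob p (fun E => almost_complete E s)
    <= (k * k * 2 ^ m * 2 ^ m * 2 ^ m)%:R * expR (- (s / 12)).
Proof.
move=> p01 hs; rewrite Gnpk_probE -bernoulli_probC.
apply: le_trans (bernoulli_prob_union_bound _ p01 (@not_almost_complete_deficient s)) _.
apply: le_trans (ler_sum _ (fun e _ => bernoulli_prob_deficient_star e p01 hs)) _.
by rewrite sumr_const mulr_natl !card_prod !card_ord.
Qed.

End DeficientStars.

Lemma blocksizeE m : blocksize m = (2 ^ m * 2 ^ m)%N.
Proof. by rewrite /blocksize -expnMn. Qed.

Section AlmostComplete.
Local Set Implicit Arguments.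
Local Unset Strict Implicit.
Variables (R : realType) (k m : nat) (p : R).
Implicit Types E : {set vert k m * vert k m}.

Lemma s_bound_ge_sqrt : 2 * (2 ^ m)%:R * (1 - p) <= s_bound k m p.
Proof. by rewrite /s_bound le_max blocksizeE natrM -expr2 sqrtr_sqr ger0_norm ?lexx. Qed.

Lemma s_bound_ge_ln : (0 < k)%N ->
  36 * ln ((k * blocksize m)%N%:R) <= s_bound k m p.
Proof.
move=> k_gt0; rewrite /s_bound le_max; apply/orP; right; rewrite /log2.
set x : R := (k * blocksize m)%N%:R.
have ln_x_ge0 : 0 <= ln x by rewrite ln_ge0 // ler1n blocksizeE !muln_gt0 k_gt0 !expn_gt0.
have e_ge2 : 2 <= expR 1 :> R by have := expR_ge1Dx (1 : R); lra.
have ln2_gt0 : 0 < ln (2 : R) by rewrite ln_gt0 // ltr1n.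
have ln2_le1 : ln (2 : R) <= 1.
  by rewrite -[leRHS](expRK 1) ler_ln ?posrE ?expR_gt0 //; lra.
have ln_le_log2 : ln x <= ln x / ln 2 by rewrite ler_pdivlMr //; nra.
have e2_ge4 : 4 <= expR 1 ^+ 2 :> R by rewrite expr2; nra.
nra.
Qed.

Lemma Gnpk_prob_le1 (A : pred {set vert k m * vert k m}) :
  0 <= p <= 1 -> Gnpk_prob p A <= 1.
Proof.
move=> p01; rewrite Gnpk_probE -(bernoulli_prob_predT (cross_pairs k m) p).
exact: bernoulli_prob_le.
Qed.

Lemma Gnpk_prob_almost_complete_ge : (0 < k)%N -> 0 <= p <= 1 ->
  1 - (2 ^ m)%:R^-1 <= Gnpk_prob p (fun E => almost_complete E (s_bound k m p)).
Proof.
move=> k_gt0 p01; set s := s_bound k m p; set N := (2 ^ m)%N.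
have N_gt0 : (0 < N)%N by rewrite expn_gt0.
set x : R := (k * blocksize m)%N%:R.
have x_gt0 : 0 < x by rewrite ltr0n blocksizeE !muln_gt0 k_gt0 N_gt0.
have exp_le : expR (- (s / 12)) <= (x ^+ 3)^-1.
  rewrite -[x in (x ^+ 3)^-1]lnK ?posrE // -expRM_natl -expRN ler_expR.
  have := s_bound_ge_ln k_gt0; rewrite -/x -/s; lra.
rewrite lerBlDr -lerBlDl.
apply: le_trans (Gnpk_prob_not_almost_complete k p01 s_bound_ge_sqrt) _.
apply: le_trans (ler_wpM2l _ exp_le) _ => //.
rewrite ler_pdivrMr ?exprn_gt0 // mulrC ler_pdivlMr ?ltr0n //.
rewrite /x -natrM -natrX ler_nat blocksizeE -/N.
have -> : ((k * (N * N)) ^ 3 = (k * k * N * N * N * N) * (k * N * N))%N by ring.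
by rewrite leq_pmulr // !muln_gt0 k_gt0 N_gt0.
Qed.

End AlmostComplete.

Local Open Scope classical_set_scope.

Theorem lemma3p2 (R : realType) (k : nat -> nat) (p : nat -> R)
  (hk : forall m, (0 < k m)%N)
  (hp : forall m, 0 <= p m <= 1) :
  [sequence @Gnpk_prob R (k m) m (p m)
     (fun E => @almost_complete R (k m) m E (s_bound (k m) m (p m)))]_m @ \oo --> (1 : R).
Proof.
apply: (@squeeze_cvgr _ _ _ _ (fun m => 1 - (2^-1 : R) ^+ m) (fun _ => 1)).
- apply: nearW => m /=; rewrite exprVn -natrX Gnpk_prob_le1 ?andbT //.
  exact: Gnpk_prob_almost_complete_ge.
- rewrite -[X in _ --> X]subr0; apply: cvgB; first exact: cvg_cst.
  by apply: cvg_expr; rewrite ger0_norm ?invr_ge0 // invf_lt1 // ltr1n.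
- exact: cvg_cst.
Qed.
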